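(* Let $G$ be a $k$-group and $A$ a continuous $G$-module (in the $k$-sense). Then the row augmentation $j_{h,k}^*\colon C_{lc,k}^*(G,A)\hookrightarrow\mathrm{Tot}\,A_{lc,k}^{*,*}(G,A)^G$ induces an isomorphism in cohomology.
   Context: For a topological space $X$, $\mathrm{k}X$ denotes its $k$-ification; products of $k$-spaces are taken as $\mathrm{k}(X\times Y)$ and denoted $\times_k$. A $k$-group is a group $G$ with a topology such that multiplication is continuous on $\mathrm{k}(G\times G)$; a continuous $G$-module here is an abelian topological group $A$ with an action of $G$ by automorphisms continuous on $\mathrm{k}(G\times A)$. For an identity neighbourhood $U$ put $\Gamma_U^0:=G$ and, for $q\ge1$, $\Gamma_U^q:=\{(g_0,\dots,g_q)\in G^{q+1}\mid g_i^{-1}g_j\in U\ \forall i,j\}$. $G$ acts on maps $f\colon G^{n+1}\to A$ by $(g.f)(g_0,\dots,g_n)=g.f(g^{-1}g_0,\dots,g^{-1}g_n)$, with differential $df(g_0,\dots,g_{n+1})=\sum_i(-1)^if(g_0,\dots,\widehat{g_i},\dots,g_{n+1})$. $C_{lc,k}^n(G,A)$ is the complex of $G$-equivariant maps $f\colon G^{n+1}\to A$ such that for some identity neighbourhood $U$ the restriction to $\mathrm{k}\Gamma_U^n$ is continuous. $A_{lc,k}^{p,q}(G,A)$ is the group of maps $f\colon G^{p+1}\times G^{q+1}\to A$ such that for some identity neighbourhood $U$ the restriction to $\mathrm{k}G^{p+1}\times_k\mathrm{k}\Gamma_U^q$ is continuous, with $d_hf(x_0,\dots,x_{p+1},\vec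 y)=\sum_i(-1)^if(x_0,\dots,\widehat{x_i},\dots,x_{p+1},\vec y)$ and $d_vf(\vec x,y_0,\dots,y_{q+1})=(-1)^p\sum_i(-1)^if(\vec x,y_0,\dots,\widehat{y_i},\dots,y_{q+1})$. $G$ acts by $(g.f)(\vec x,\vec y)=g.f(g^{-1}\vec x,g^{-1}\vec y)$; $\mathrm{Tot}\,A_{lc,k}^{*,*}(G,A)^G$ is the total complex of the fixed-point double complex (differential $d_h+d_v$), and $j_{h,k}(f)(x_0,\vec y)=f(\vec y)$. *)

From HB Require Import structures.
From mathcomp Require Import all_boot all_order all_algebra.
From mathcomp Require Import monoid.
From mathcomp Require Import all_classical all_reals all_analysis.

Set Implicit Arguments.
Unset Strict Implicit.
Unset Printing Implicit Defensive.

Import Order.TTheory GRing.Theory Num.Theory.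
Local Open Scope classical_set_scope.
Local Open Scope ring_scope.

(** Groups carrying a topology (no compatibility axiom yet). *)
#[short(type="topGroupType")]
HB.structure Definition TopGroup := {G of Group G & Topological G}.

(** Test spaces for k-ification (Strickland's convention): compact Hausdorff. *)
Definition test_space (K : topologicalType) : Prop :=
  compact [set: K] /\ hausdorff_space K.

(** [kopen S B]: the trace [B `&` S] is open in k(S), where S carries the
    subspace topology of X: for every compact Hausdorff K and every
    continuous u : K -> S, u^-1(B) is open in K.  (A continuous map into
    the subspace S is a continuous map into X with values in S.) *)
Definition kopen (X : topologicalType) (S : set X) (B : set X) : Prop :=
  forall K : topologicalType, test_space K ->
  forall u : K -> X, continuous u -> (forall k, S (u k)) ->
  open (u @^-1` B).

Definition kcont_into (K X : topologicalType) (S : set X) (u : K -> X) : Prop :=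
  (forall k, S (u k)) /\ (forall B : set X, kopen S B -> open (u @^-1` B)).

(** [kprod_open S B]: the trace of B on X x S is open in
    k(kX x kS) = kX x_k kS.  A continuous map K -> kX x kS into the product
    is a pair of continuous maps into the factors. *)
Definition kprod_open (X Y : topologicalType) (S : set Y) (B : set (X * Y)) :
  Prop :=
  forall K : topologicalType, test_space K ->
  forall (u : K -> X) (v : K -> Y),
  kcont_into [set: X] u -> kcont_into S v ->
  open ((fun k => (u k, v k)) @^-1` B).

Definition kcont_on (X Y : topologicalType) (S : set X) (f : X -> Y) : Prop :=
  forall B : set Y, open B -> kopen S (f @^-1` B).

Definition is_kgroup (G : topGroupType) : Prop :=
  forall B : set G, open B -> kopen [set: G * G] ((fun z => monoid.mul z.1 z.2) @^-1` B).

Definition is_kmodule (G : topGroupType) (A : topologicalZmodType)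
  (act : G -> A -> A) : Prop :=
  [/\ forall a, act monoid.one a = a,
      forall g h a, act (monoid.mul g h) a = act g (act h a),
      forall g a b, act g (a + b) = act g a + act g b &
      forall B : set A, open B ->
        kopen [set: G * A] ((fun z => act z.1 z.2) @^-1` B)].

Section Cochains.
Variables (G : topGroupType) (A : topologicalZmodType) (act : G -> A -> A).

Definition Gpow (m : nat) := prod_topology (fun _ : 'I_m => G).

Definition lmul m (g : G) (x : Gpow m) : Gpow m := fun i => monoid.mul g (x i).

Definition Gamma (U : set G) (q : nat) : set (Gpow q.+1) :=
  match q with
  | 0 => setT
  | _.+1 => [set x | forall i j, U (monoid.mul (monoid.inv (x i)) (x j))]
  end.
Arguments Gamma U q : clear implicits.

Definition face m (i : 'I_m.+2) (x : Gpow m.+2) : Gpow m.+1 :=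
  fun j => x (lift i j).

Definition Ccochain (n : nat) (f : Gpow n.+1 -> A) : Prop :=
  (forall g x, act g (f (lmul (monoid.inv g) x)) = f x) /\
  exists U : set G, nbhs (monoid.one : G) U /\ kcont_on (Gamma U n) f.

Definition dC (n : nat) (f : Gpow n.+1 -> A) : Gpow n.+2 -> A :=
  fun x => \sum_(i < n.+2) f (face i x) *~ ((-1) ^+ i).

Definition Abi p q (f : Gpow p.+1 -> Gpow q.+1 -> A) : Prop :=
  exists U : set G, nbhs (monoid.one : G) U /\
  forall B : set A, open B ->
    kprod_open (Gamma U q) [set z | B (f z.1 z.2)].

Definition Ginvariant p q (f : Gpow p.+1 -> Gpow q.+1 -> A) : Prop :=
  forall g x y, act g (f (lmul (monoid.inv g) x) (lmul (monoid.inv g) y)) = f x y.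

Definition dh p q (f : Gpow p.+1 -> Gpow q.+1 -> A) : Gpow p.+2 -> Gpow q.+1 -> A :=
  fun x y => \sum_(i < p.+2) f (face i x) y *~ ((-1) ^+ i).

Definition dv p q (f : Gpow p.+1 -> Gpow q.+1 -> A) : Gpow p.+1 -> Gpow q.+2 -> A :=
  fun x y => (\sum_(i < q.+2) f x (face i y) *~ ((-1) ^+ i)) *~ ((-1) ^+ p).

(** Families of bicochains indexed by bidegree (p,q); an element of
    Tot^n is such a family where only the components with p+q = n matter. *)
Definition bifam := forall p q : nat, Gpow p.+1 -> Gpow q.+1 -> A.

Definition bifam0 : bifam := fun p q x y => 0.
Definition bifam_sub (F F' : bifam) : bifam := fun p q x y => F p q x y - F' p q x y.

Definition TotElem (n : nat) (F : bifam) : Prop :=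
  forall p q, (p + q)%N = n -> Abi (F p q) /\ Ginvariant (F p q).

Definition eqTot (n : nat) (F F' : bifam) : Prop :=
  forall p q, (p + q)%N = n -> F p q = F' p q.

Definition DTot (F : bifam) : bifam :=
  fun p q x y =>
    (match p return Gpow p.+1 -> A with
     | 0 => fun _ => 0
     | p'.+1 => fun x => dh (F p' q) x y
     end) x +
    (match q return Gpow q.+1 -> A with
     | 0 => fun _ => 0
     | q'.+1 => fun y => dv (F p q') x y
     end) y.

(** the row augmentation j_{h,k} : C^n -> Tot^n, landing in bidegree (0,n):
    j(f)(x_0, y) = f(y)  (when q = n, [inord] is the identity on 'I_(n+1)). *)
Definition jhk (n : nat) (f : Gpow n.+1 -> A) : bifam :=
  fun p q x y =>
    if (p == 0)%N && (q == n) then f (fun i : 'I_n.+1 => y (inord i)) else 0.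

Definition TotCobound (n : nat) (X : bifam) : Prop :=
  match n with
  | 0 => eqTot 0 X bifam0
  | m.+1 => exists E, TotElem m E /\ eqTot m.+1 X (DTot E)
  end.

Definition CCobound (n : nat) : (Gpow n.+1 -> A) -> Prop :=
  match n return (Gpow n.+1 -> A) -> Prop with
  | 0 => fun f => f = (fun _ => 0)
  | m.+1 => fun f => exists e, Ccochain e /\ f = dC e
  end.


End Cochains.
Arguments Gamma [G] U q.
Arguments CCobound [G A] act n.
Arguments bifam0 [G A] p q.
Arguments bifam_sub [G A] F F' p q.
Arguments DTot [G A] F p q.
Arguments jhk [G A n] f p q.
Arguments TotElem [G A] act n%_nat F.
Arguments eqTot [G A] n%_nat F F'.
Arguments TotCobound [G A] act n%_nat X.

From mathcomp Require Import all_boot all_order all_algebra.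
From mathcomp Require Import monoid.
From mathcomp Require Import all_classical all_reals all_analysis.
From mathcomp Require Import zify.

Set Implicit Arguments.
Unset Strict Implicit.
Unset Printing Implicit Defensive.
Import GRing.Theory.
Local Open Scope classical_set_scope.
Local Open Scope ring_scope.

(* Every row of the double complex, augmented by C^q, is contractible: the
   homotopy h f (x, y) := f (y_0, x, y) satisfies d_h h + h d_h = id, it
   preserves G-invariance and the k-continuity condition (it only reorders
   coordinates), and a d_h-cocycle in column 0 does not depend on x, so it is
   a cochain of C^q.  The staircase argument then moves a total cochain whose
   differential lies in column 0 into column 0 modulo total coboundaries;
   applied to cocycles this gives surjectivity, applied to a cochain E with
   D E = j f it writes f as a coboundary, which gives injectivity. *)

Section SimplicialIdentities.
Variables (G : topGroupType) (A : topologicalZmodType).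

Lemma bump_bumpS i j k : (i <= j)%N -> bump j.+1 (bump i k) = bump i (bump j k).
Proof. by move=> lij; rewrite /bump; do 4 (case: leqP => ?); lia. Qed.

Lemma face_face m (i : 'I_m.+3) (j : 'I_m.+2) (x : Gpow G m.+3) : (i <= j)%N ->
  face (inord i) (face (inord j.+1) x) = face j (face i x).
Proof.
move=> lij; apply/funext => k; rewrite /face; congr (x _); apply: val_inj => /=.
have hj := ltn_ord j; rewrite !inordK ?bump_bumpS //; lia.
Qed.

(* The pairs (i, j) and (j + 1, i) with i <= j index the same double face
   (face_face) with opposite signs. *)
Definition face_pair_swap m (ij : 'I_m.+3 * 'I_m.+2) : 'I_m.+3 * 'I_m.+2 :=
  if (ij.1 <= ij.2)%N then (inord ij.2.+1, inord ij.1)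
  else (inord ij.2, inord ij.1.-1).

Lemma face_pair_swapK m : involutive (@face_pair_swap m).
Proof.
case=> i j; have := ltn_ord i; have := ltn_ord j.
rewrite /face_pair_swap /=; case: (leqP i j) => lij /= ? ?.
  rewrite !inordK; try lia.
  have -> : (j.+1 <= i)%N = false by lia.
  by congr pair; apply: val_inj; rewrite /= inordK //; lia.
rewrite !inordK; try lia.
have -> : (j <= i.-1)%N = true by lia.
by congr pair; apply: val_inj; rewrite /= inordK //; lia.
Qed.

Lemma face_pair_swap_le m (ij : 'I_m.+3 * 'I_m.+2) :
  ((face_pair_swap ij).1 <= (face_pair_swap ij).2)%N = ~~ (ij.1 <= ij.2)%N.
Proof.
case: ij => i j; have := ltn_ord i; have := ltn_ord j.
by rewrite /face_pair_swap /=; case: (leqP i j) => /= ? ? ?; rewrite !inordK; lia.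
Qed.

Lemma dCdC m (g : Gpow G m.+1 -> A) x : dC (dC g) x = 0.
Proof.
rewrite /dC; under eq_bigr => i _ do rewrite mulrz_suml.
rewrite pair_bigA /= (bigID (fun ij : 'I_m.+3 * 'I_m.+2 => (ij.1 <= ij.2)%N)) /=.
rewrite [X in _ + X](reindex_inj (can_inj (@face_pair_swapK m))) /=.
under [X in _ + X]eq_bigl => ij do rewrite face_pair_swap_le negbK.
rewrite -big_split /= big1 // => -[i j] /= lij.
have hj := ltn_ord j; rewrite /face_pair_swap /= lij face_face // !inordK; try lia.
by rewrite exprS mulN1r mulrNz mulrzAC subrr.
Qed.

Lemma dhdh p q (f : Gpow G p.+1 -> Gpow G q.+1 -> A) x y : dh (dh f) x y = 0.
Proof. exact: (dCdC (fun x' => f x' y) x). Qed.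

Lemma dvdv p q (f : Gpow G p.+1 -> Gpow G q.+1 -> A) x y : dv (dv f) x y = 0.
Proof.
rewrite /dv; under eq_bigr => i _ do rewrite mulrzAC.
by rewrite -mulrz_suml; have := dCdC (f x) y; rewrite /dC => ->; rewrite !mul0rz.
Qed.

Lemma dvdhN p q (f : Gpow G p.+1 -> Gpow G q.+1 -> A) x y :
  dv (dh f) x y = - dh (dv f) x y.
Proof.
rewrite /dh /dv exprS mulN1r mulrNz; congr (- _).
rewrite mulrz_suml; under eq_bigr => j _ do rewrite !mulrz_suml.
rewrite exchange_big /=; apply: eq_bigr => i _.
rewrite -mulrzA mulrz_suml; apply: eq_bigr => j _.
by rewrite -!mulrzA mulrCA [(-1) ^+ i * _]mulrC.
Qed.


End SimplicialIdentities.

Section ContinuityFacts.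
Variable K : topologicalType.

Lemma continuous_into_prod (I : eqType) (T : I -> topologicalType)
    (f : K -> prod_topology T) :
  (forall i, continuous (fun k => f k i)) -> continuous f.
Proof.
move=> cf x; apply/cvg_sup => i; move: x.
apply/(@continuousP _ (initial_topology (@^~ i))) => B [C oC <-].
by move/continuousP : (cf i); apply.
Qed.

Lemma continuous_coord (I : eqType) (T : I -> topologicalType)
    (f : K -> prod_topology T) (i : I) :
  continuous f -> continuous (fun k => f k i).
Proof.
by move=> cf x; exact: (continuous_comp (cf x) (@proj_continuous I T i (f x))).
Qed.

Lemma continuous_add_fun (B : topologicalZmodType) (a b : K -> B) :
  continuous a -> continuous b -> continuous (fun k => a k + b k).
Proof.
move=> ca cb x.
by apply: (@continuous2_cvg _ _ _ _ _ _ a b (fun u v => u + v));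
  [exact: (@add_continuous _ (a x, b x)) | exact: ca | exact: cb].
Qed.

Lemma continuous_opp_fun (B : topologicalZmodType) (a : K -> B) :
  continuous a -> continuous (fun k => - a k).
Proof. by move=> ca x; exact: (continuous_comp (ca x) (@opp_continuous B (a x))). Qed.

Lemma kcont_intoP (X : topologicalType) (S : set X) (u : K -> X) :
  test_space K -> kcont_into S u <-> continuous u /\ forall k, S (u k).
Proof.
move=> tK; split; last by case=> cu Su; split => // B kB; exact: kB K tK u cu Su.
case=> Su kcu; split => //; apply/continuousP => B oB; apply: kcu.
by move=> K' tK' v cv _; move/continuousP : cv; apply.
Qed.

End ContinuityFacts.

Section KContinuity.
Variables (G : topGroupType) (A : topologicalZmodType).

Definition gcons m (a : G) (x : Gpow G m) : Gpow G m.+1 :=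
  fun i => if unlift ord0 i is Some j then x j else a.

Definition contract p q (f : Gpow G p.+2 -> Gpow G q.+1 -> A) :
    Gpow G p.+1 -> Gpow G q.+1 -> A :=
  fun x y => f (gcons (y ord0) x) y.

Lemma face_continuous (K : topologicalType) m (i : 'I_m.+2) (w : K -> Gpow G m.+2) :
  continuous w -> continuous (fun k => face i (w k)).
Proof.
by move=> cw; apply: continuous_into_prod => j; exact: continuous_coord (lift i j) cw.
Qed.

Lemma gcons_continuous (K : topologicalType) m (a : K -> G) (w : K -> Gpow G m) :
  continuous a -> continuous w -> continuous (fun k => gcons (a k) (w k)).
Proof.
move=> ca cw; apply: continuous_into_prod => i; rewrite /gcons.
by case: (unlift ord0 i) => [j|] //; exact: continuous_coord j cw.
Qed.

Lemma Gamma_sub (U V : set G) q : U `<=` V -> Gamma U q `<=` Gamma V q.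
Proof. by case: q => [|q] // UV x Ux i j; apply: UV. Qed.

Lemma Gamma_face (U : set G) q (i : 'I_q.+2) y :
  Gamma U q.+1 y -> Gamma U q (face i y).
Proof. by case: q i y => [|q] i y // Uy a b; apply: Uy. Qed.

Definition kcont_near p q (U : set G) (f : Gpow G p.+1 -> Gpow G q.+1 -> A) :=
  forall K : topologicalType, test_space K ->
  forall (u : K -> Gpow G p.+1) (v : K -> Gpow G q.+1),
  continuous u -> continuous v -> (forall k, Gamma U q (v k)) ->
  continuous (fun k => f (u k) (v k)).

Lemma AbiP p q (f : Gpow G p.+1 -> Gpow G q.+1 -> A) :
  Abi f <-> exists2 U, nbhs (monoid.one : G) U & kcont_near U f.
Proof.
split.
  case=> U [nU fU]; exists U => // K tK u v cu cv Uv.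
  by apply/continuousP => B oB; apply: (fU B oB K tK); apply/kcont_intoP.
case=> U nU fU; exists U; split => // B oB K tK u v /kcont_intoP [] // cu _.
move=> /kcont_intoP [] // cv Uv.
by move/continuousP : (fU K tK u v cu cv Uv); apply.
Qed.

Lemma kcont_near_sub p q (U V : set G) (f : Gpow G p.+1 -> Gpow G q.+1 -> A) :
  U `<=` V -> kcont_near V f -> kcont_near U f.
Proof.
by move=> UV fV K tK u v cu cv Uv; apply: fV => // k; exact: Gamma_sub UV _ (Uv k).
Qed.

Lemma Abi0 p q : Abi (fun (_ : Gpow G p.+1) (_ : Gpow G q.+1) => 0 : A).
Proof.
by apply/AbiP; exists setT; [exact: filterT | move=> *; exact: cst_continuous].
Qed.

Lemma AbiD p q (f g : Gpow G p.+1 -> Gpow G q.+1 -> A) :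
  Abi f -> Abi g -> Abi (fun x y => f x y + g x y).
Proof.
move=> /AbiP [U nU fU] /AbiP [V nV gV]; apply/AbiP; exists (U `&` V).
  exact: filterI.
have UVf : kcont_near (U `&` V) f by apply: kcont_near_sub fU; exact: subIsetl.
have UVg : kcont_near (U `&` V) g by apply: kcont_near_sub gV; exact: subIsetr.
by move=> K tK u v cu cv UVv; apply: continuous_add_fun; [exact: UVf | exact: UVg].
Qed.

Lemma AbiN p q (f : Gpow G p.+1 -> Gpow G q.+1 -> A) :
  Abi f -> Abi (fun x y => - f x y).
Proof.
move=> /AbiP [U nU fU]; apply/AbiP; exists U => // K tK u v cu cv Uv.
exact/continuous_opp_fun/fU.
Qed.

Lemma mulrz_sign (a : A) i : a *~ ((-1) ^+ i) = if odd i then - a else a.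
Proof. by rewrite -signr_odd; case: (odd i); rewrite ?expr1 ?mulrN1z ?mulr1z. Qed.

Lemma Abi_sign p q (f : Gpow G p.+1 -> Gpow G q.+1 -> A) i :
  Abi f -> Abi (fun x y => f x y *~ ((-1) ^+ i)).
Proof.
move=> Af; under eq_fun => x do under eq_fun => y do rewrite mulrz_sign.
by case: (odd i) => //; exact: AbiN.
Qed.

Lemma Abi_sum p q n (F : 'I_n -> Gpow G p.+1 -> Gpow G q.+1 -> A) :
  (forall i, Abi (F i)) -> Abi (fun x y => \sum_(i < n) F i x y).
Proof.
elim: n F => [|n IH] F AF.
  by under eq_fun => x do under eq_fun => y do rewrite big_ord0; exact: Abi0.
under eq_fun => x do under eq_fun => y do rewrite big_ord_recr.
by apply: AbiD => //; apply: IH.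
Qed.

Lemma Abi_dh p q (f : Gpow G p.+1 -> Gpow G q.+1 -> A) : Abi f -> Abi (dh f).
Proof.
move=> /AbiP [U nU fU]; apply: Abi_sum => i; apply: Abi_sign.
apply/AbiP; exists U => // K tK u v cu cv Uv.
by apply: fU => //; exact: face_continuous.
Qed.

Lemma Abi_dv p q (f : Gpow G p.+1 -> Gpow G q.+1 -> A) : Abi f -> Abi (dv f).
Proof.
move=> /AbiP [U nU fU]; apply: Abi_sign; apply: Abi_sum => i; apply: Abi_sign.
apply/AbiP; exists U => // K tK u v cu cv Uv.
by apply: fU => // [|k]; [exact: face_continuous | exact: Gamma_face].
Qed.

Lemma Abi_contract p q (f : Gpow G p.+2 -> Gpow G q.+1 -> A) :
  Abi f -> Abi (contract f).
Proof.
move=> /AbiP [U nU fU]; apply/AbiP; exists U => // K tK u v cu cv Uv.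
by apply: fU => //; apply: gcons_continuous => //; exact: continuous_coord ord0 cv.
Qed.

End KContinuity.

Section Invariance.
Variables (G : topGroupType) (A : topologicalZmodType) (act : G -> A -> A).
Hypothesis actD : forall g a b, act g (a + b) = act g a + act g b.

Lemma act0 g : act g 0 = 0.
Proof. by apply: (addrI (act g 0)); rewrite -actD !addr0. Qed.

Lemma actN g a : act g (- a) = - act g a.
Proof. by apply/eqP; rewrite -addr_eq0 -actD addNr act0. Qed.

Lemma act_sum g n (F : 'I_n -> A) : act g (\sum_(i < n) F i) = \sum_(i < n) act g (F i).
Proof. exact: (big_morph (act g) (actD g) (act0 g)). Qed.

Lemma act_sign g a i : act g (a *~ ((-1) ^+ i)) = act g a *~ ((-1) ^+ i).
Proof. by rewrite !mulrz_sign; case: (odd i); rewrite ?actN. Qed.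

Lemma Ginvariant0 p q :
  Ginvariant act (fun (_ : Gpow G p.+1) (_ : Gpow G q.+1) => 0 : A).
Proof. by move=> g x y; rewrite act0. Qed.

Lemma GinvariantD p q (f g : Gpow G p.+1 -> Gpow G q.+1 -> A) :
  Ginvariant act f -> Ginvariant act g -> Ginvariant act (fun x y => f x y + g x y).
Proof. by move=> If Ig h x y; rewrite actD If Ig. Qed.

Lemma GinvariantN p q (f : Gpow G p.+1 -> Gpow G q.+1 -> A) :
  Ginvariant act f -> Ginvariant act (fun x y => - f x y).
Proof. by move=> If h x y; rewrite actN If. Qed.

Lemma Ginvariant_dh p q (f : Gpow G p.+1 -> Gpow G q.+1 -> A) :
  Ginvariant act f -> Ginvariant act (dh f).
Proof.
by move=> If g x y; rewrite /dh act_sum; apply: eq_bigr => i _; rewrite act_sign If.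
Qed.

Lemma Ginvariant_dv p q (f : Gpow G p.+1 -> Gpow G q.+1 -> A) :
  Ginvariant act f -> Ginvariant act (dv f).
Proof.
move=> If g x y; rewrite /dv act_sign act_sum; congr (_ *~ _).
by apply: eq_bigr => i _; rewrite act_sign If.
Qed.

Lemma gcons_lmul m g a (x : Gpow G m) :
  gcons (monoid.mul g a) (lmul g x) = lmul g (gcons a x).
Proof. by apply/funext => i; rewrite /gcons /lmul; case: (unlift ord0 i). Qed.

Lemma Ginvariant_contract p q (f : Gpow G p.+2 -> Gpow G q.+1 -> A) :
  Ginvariant act f -> Ginvariant act (contract f).
Proof. by move=> If g x y; rewrite /contract [X in gcons X]/lmul gcons_lmul If. Qed.

End Invariance.

Section TotalComplex.
Variables (G : topGroupType) (A : topologicalZmodType) (act : G -> A -> A).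
Hypothesis actD : forall g a b, act g (a + b) = act g a + act g b.
Implicit Types E F X Y : bifam G A.

Lemma dh_eq0 p q (f : Gpow G p.+1 -> Gpow G q.+1 -> A) :
  (forall x y, f x y = 0) -> forall x y, dh f x y = 0.
Proof. by move=> f0 x y; rewrite /dh big1 // => i _; rewrite f0 mul0rz. Qed.

Lemma dv_eq0 p q (f : Gpow G p.+1 -> Gpow G q.+1 -> A) :
  (forall x y, f x y = 0) -> forall x y, dv f x y = 0.
Proof. by move=> f0 x y; rewrite /dv big1 ?mul0rz // => i _; rewrite f0 mul0rz. Qed.

Lemma dhD p q (f g : Gpow G p.+1 -> Gpow G q.+1 -> A) x y :
  dh (fun x y => f x y + g x y) x y = dh f x y + dh g x y.
Proof. by rewrite /dh -big_split; apply: eq_bigr => i _; rewrite mulrzDl. Qed.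

Lemma dvD p q (f g : Gpow G p.+1 -> Gpow G q.+1 -> A) x y :
  dv (fun x y => f x y + g x y) x y = dv f x y + dv g x y.
Proof.
rewrite /dv -mulrzDl -big_split; congr (_ *~ _).
by apply: eq_bigr => i _; rewrite mulrzDl.
Qed.

Lemma dhB p q (f g : Gpow G p.+1 -> Gpow G q.+1 -> A) x y :
  dh (fun x y => f x y - g x y) x y = dh f x y - dh g x y.
Proof. by rewrite /dh -sumrB; apply: eq_bigr => i _; rewrite mulrzBl. Qed.

Lemma dvB p q (f g : Gpow G p.+1 -> Gpow G q.+1 -> A) x y :
  dv (fun x y => f x y - g x y) x y = dv f x y - dv g x y.
Proof.
rewrite /dv -mulrzBl -sumrB; congr (_ *~ _).
by apply: eq_bigr => i _; rewrite mulrzBl.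
Qed.

Lemma DTot00 E : DTot E 0 0 = fun _ _ => 0.
Proof. by apply/funext => x; apply/funext => y; rewrite /DTot addr0. Qed.

Lemma DTot0S E q : DTot E 0 q.+1 = dv (E 0 q).
Proof. by apply/funext => x; apply/funext => y; rewrite /DTot add0r. Qed.

Lemma DTotS0 E p : DTot E p.+1 0 = dh (E p 0).
Proof. by apply/funext => x; apply/funext => y; rewrite /DTot addr0. Qed.

Lemma DTotSS E p q :
  DTot E p.+1 q.+1 = fun x y => dh (E p q.+1) x y + dv (E p.+1 q) x y.
Proof. by []. Qed.

Lemma DD E p q x y : DTot (DTot E) p q x y = 0.
Proof.
case: p x => [|p] x; case: q y => [|q] y.
- by rewrite DTot00.
- rewrite DTot0S; case: q y => [|q] y; first by rewrite DTot00 dv_eq0.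
  by rewrite DTot0S dvdv.
- rewrite DTotS0; case: p x => [|p] x; first by rewrite DTot00 dh_eq0.
  by rewrite DTotS0 dhdh.
- rewrite DTotSS; case: p x => [|p] x; case: q y => [|q] y.
  + by rewrite DTot0S DTotS0 dvdhN subrr.
  + by rewrite DTot0S DTotSS dvD dvdv addr0 dvdhN subrr.
  + by rewrite DTotSS DTotS0 dhD dhdh add0r dvdhN subrr.
  + by rewrite !DTotSS dhD dvD dhdh dvdv add0r addr0 dvdhN subrr.
Qed.

Definition bifam_add E F : bifam G A := fun p q x y => E p q x y + F p q x y.

Lemma DTotD E F p q x y :
  DTot (bifam_add E F) p q x y = DTot E p q x y + DTot F p q x y.
Proof.
case: p x => [|p] x; case: q y => [|q] y.
- by rewrite !DTot00 addr0.
- by rewrite !DTot0S dvD.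
- by rewrite !DTotS0 dhD.
- by rewrite !DTotSS /= dhD dvD addrACA.
Qed.

Lemma DTotB E F p q x y :
  DTot (bifam_sub E F) p q x y = DTot E p q x y - DTot F p q x y.
Proof.
case: p x => [|p] x; case: q y => [|q] y.
- by rewrite !DTot00 subrr.
- by rewrite !DTot0S dvB.
- by rewrite !DTotS0 dhB.
- by rewrite !DTotSS /= dhB dvB addrACA opprD.
Qed.

Lemma DTot0 p q x y : DTot (@bifam0 G A) p q x y = 0.
Proof.
case: p x => [|p] x; case: q y => [|q] y.
- by rewrite DTot00.
- by rewrite DTot0S dv_eq0.
- by rewrite DTotS0 dh_eq0.
- by rewrite DTotSS /= dh_eq0 ?dv_eq0 ?addr0.
Qed.

Lemma TotElem0 n : TotElem act n (@bifam0 G A).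
Proof. by move=> p q _; split; [exact: Abi0 | exact: (Ginvariant0 actD)]. Qed.

Lemma TotElemD n E F :
  TotElem act n E -> TotElem act n F -> TotElem act n (bifam_add E F).
Proof.
move=> TE TF p q hpq; have [AE IE] := TE p q hpq; have [AF IF] := TF p q hpq.
by split; [exact: AbiD | exact: (GinvariantD actD)].
Qed.

Lemma TotElemB n E F :
  TotElem act n E -> TotElem act n F -> TotElem act n (bifam_sub E F).
Proof.
move=> TE TF p q hpq; have [AE IE] := TE p q hpq; have [AF IF] := TF p q hpq.
split; first by apply: AbiD => //; exact: AbiN.
by apply: (GinvariantD actD) => //; exact: (GinvariantN actD).
Qed.

Lemma TotElem_DTot n E : TotElem act n E -> TotElem act n.+1 (DTot E).
Proof.
move=> TE [|p] [|q] hpq //.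
- have [AE IE] := TE 0%N q ltac:(lia).
  by rewrite DTot0S; split; [exact: Abi_dv | exact: (Ginvariant_dv actD)].
- have [AE IE] := TE p 0%N ltac:(lia).
  by rewrite DTotS0; split; [exact: Abi_dh | exact: (Ginvariant_dh actD)].
- have [AE IE] := TE p q.+1 ltac:(lia); have [AE' IE'] := TE p.+1 q ltac:(lia).
  rewrite DTotSS; split; first by apply: AbiD; [exact: Abi_dh | exact: Abi_dv].
  apply: (GinvariantD actD); first exact: (Ginvariant_dh actD).
  exact: (Ginvariant_dv actD).
Qed.

Lemma eqTotP n E F :
  (forall p q, (p + q)%N = n -> forall x y, E p q x y = F p q x y) -> eqTot n E F.
Proof. by move=> EF p q hpq; apply/funext => x; apply/funext => y; exact: EF. Qed.

Lemma TotCobound_eq n X Y :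
  (forall p q, (p + q)%N = n -> forall x y, X p q x y = Y p q x y) ->
  TotCobound act n X -> TotCobound act n Y.
Proof.
case: n => [|m] XY.
  by move=> X0; apply: eqTotP => p q hpq x y; rewrite -XY // (X0 p q hpq).
case=> E [TE XE]; exists E; split => //.
by apply: eqTotP => p q hpq x y; rewrite -XY // (XE p q hpq).
Qed.

Lemma TotCobound0 n : TotCobound act n (@bifam0 G A).
Proof.
case: n => [|m] //; exists (@bifam0 G A); split; first exact: TotElem0.
by apply: eqTotP => p q _ x y; rewrite DTot0.
Qed.

Lemma TotCoboundD n X Y :
  TotCobound act n X -> TotCobound act n Y -> TotCobound act n (bifam_add X Y).
Proof.
case: n => [|m].
  move=> X0 Y0; apply: eqTotP => p q hpq x y.
  by rewrite /bifam_add (X0 p q hpq) (Y0 p q hpq) addr0.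
case=> E [TE XE] [F [TF YF]]; exists (bifam_add E F); split; first exact: TotElemD.
by apply: eqTotP => p q hpq x y; rewrite DTotD /bifam_add (XE p q hpq) (YF p q hpq).
Qed.

Lemma TotCobound_trans n X Y Z :
  TotCobound act n (bifam_sub X Y) -> TotCobound act n (bifam_sub Y Z) ->
  TotCobound act n (bifam_sub X Z).
Proof.
move=> XY YZ; apply: TotCobound_eq (TotCoboundD XY YZ) => p q _ x y.
by rewrite /bifam_add /bifam_sub addrA subrK.
Qed.

End TotalComplex.

Section RowContraction.
Variables (G : topGroupType) (A : topologicalZmodType) (act : G -> A -> A).

Lemma face_gcons0 m a (x : Gpow G m.+1) : face ord0 (gcons a x) = x.
Proof. by apply/funext => k; rewrite /face /gcons liftK. Qed.

Lemma face_gconsS m a (x : Gpow G m.+2) (j : 'I_m.+2) :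
  face (lift ord0 j) (gcons a x) = gcons a (face j x).
Proof.
apply/funext => k; rewrite /face /gcons; case: (unliftP ord0 k) => [k'|] ->.
  have -> : lift (lift ord0 j) (lift ord0 k') = lift ord0 (lift j k').
    by apply: val_inj => /=; rewrite /bump; do 4 (case: leqP => ?); lia.
  by rewrite !liftK.
have -> : lift (lift ord0 j) ord0 = ord0 by apply: val_inj.
by rewrite unlift_none.
Qed.

Lemma dh_contract p q (f : Gpow G p.+2 -> Gpow G q.+1 -> A) x y :
  dh (contract f) x y + contract (dh f) x y = f x y.
Proof.
rewrite /contract [X in _ + X]/dh big_ord_recl face_gcons0 expr0 mulr1z.
under [X in _ + (_ + X)]eq_bigr => j _ do rewrite face_gconsS exprS mulN1r mulrNz.
by rewrite sumrN addrCA /dh subrr addr0.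
Qed.

Lemma dh_cocycle_col0 n (Z : Gpow G 1 -> Gpow G n.+1 -> A) :
  (forall x y, dh Z x y = 0) -> forall x y, Z x y = Z (fun _ => y ord0) y.
Proof.
move=> dhZ x y; apply/eqP; rewrite -subr_eq0 -(dhZ (gcons (y ord0) x) y).
rewrite /dh big_ord_recl big_ord1 face_gcons0 expr0 expr1 mulr1z mulrN1z.
have -> // : face (lift ord0 ord0) (gcons (y ord0) x) = fun _ => y ord0.
apply/funext => j; rewrite /face /gcons.
have -> : lift (lift ord0 ord0) j = ord0 by apply: val_inj; rewrite /= (ord1 j).
by rewrite unlift_none.
Qed.

Lemma Ccochain_col0 n (Z : Gpow G 1 -> Gpow G n.+1 -> A) :
  Abi Z -> Ginvariant act Z -> Ccochain act (fun y => Z (fun _ => y ord0) y).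
Proof.
move=> /AbiP [U nU ZU] IZ; split; first by move=> g y; exact: IZ.
exists U; split => // B oB K tK u cu Uu.
have cZ := ZU K tK (fun k _ => u k ord0) u _ cu Uu.
apply/continuousP: B oB; apply: cZ.
by apply: continuous_into_prod => _; exact: continuous_coord ord0 cu.
Qed.

End RowContraction.

Section Staircase.
Variables (G : topGroupType) (A : topologicalZmodType) (act : G -> A -> A).
Hypothesis actD : forall g a b, act g (a + b) = act g a + act g b.
Implicit Types E X Y : bifam G A.

Definition columns_le d c X : Prop :=
  forall p q, (p + q)%N = d -> (c < p)%N -> forall x y, X p q x y = 0.

Lemma DTot_top_col E p q x y :
  columns_le (p + q) p E -> DTot E p.+1 q x y = dh (E p q) x y.
Proof.
case: q y => [|q] y Ep; first by rewrite DTotS0.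
by rewrite DTotSS dv_eq0 ?addr0 // => x' y'; apply: Ep; rewrite ?addSnnS.
Qed.

(* The component of X in the top column c + 1 is a d_h-cocycle, so it is the
   d_h-image of its contraction E; subtracting D E removes that column. *)
Lemma kill_top_column d c X Y :
  (c < d)%N -> TotElem act d X -> eqTot d.+1 (DTot X) Y -> columns_le d.+1 0 Y ->
  columns_le d c.+1 X ->
  exists X1, [/\ TotElem act d X1, eqTot d.+1 (DTot X1) Y, columns_le d c X1 &
                TotCobound act d (bifam_sub X X1)].
Proof.
move=> ltcd TX DXY Y0 Xc; have [q def_d] : exists q, d = (c + q).+1.
  by exists (d - c.+1)%N; lia.
subst d; pose E : bifam G A := fun p' q' x y =>
  if (p' == c) && (q' == q) then contract (X p'.+1 q') x y else 0.
have E_off p' q' x y : ~~ ((p' == c) && (q' == q)) -> E p' q' x y = 0.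
  by rewrite /E => /negbTE ->.
have Ecq : E c q = contract (X c.+1 q).
  by apply/funext => x; apply/funext => y; rewrite /E !eqxx.
have TE : TotElem act (c + q) E.
  move=> p' q' _.
  case: (boolP ((p' == c) && (q' == q))) => [/andP [/eqP -> /eqP ->]|off].
    have [AX IX] := TX c.+1 q ltac:(lia).
    by rewrite Ecq; split; [exact: Abi_contract | exact: Ginvariant_contract].
  have -> : E p' q' = fun _ _ => 0.
    by apply/funext => x; apply/funext => y; exact: E_off.
  by split; [exact: Abi0 | exact: (Ginvariant0 actD)].
have dhX x y : dh (X c.+1 q) x y = 0.
  rewrite -DTot_top_col; last by move=> p' q' ? ? ? ?; apply: Xc; lia.
  by rewrite (DXY c.+2 q); [apply: Y0; lia | lia].
exists (bifam_sub X (DTot E)); split.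
- by apply: TotElemB => //; exact: TotElem_DTot.
- by apply: eqTotP => p' q' hpq x y; rewrite DTotB DD subr0 (DXY p' q' hpq).
- move=> [|p'] q' hpq hp x y; first by lia.
  rewrite /bifam_sub DTot_top_col; last first.
    by move=> p'' q'' ? ? ? ?; apply: E_off; apply/negP => /andP [/eqP ? _]; lia.
  have [ltcp|eqcp] : (c < p')%N \/ p' = c by lia.
    have E0 x' y' : E p' q' x' y' = 0.
      by apply: E_off; apply/negP => /andP [/eqP ? _]; lia.
    by rewrite (dh_eq0 E0) Xc ?subr0 //; lia.
  have eqq : q' = q by lia.
  subst p' q'; rewrite Ecq -{1}(dh_contract (X c.+1 q) x y) addrAC subrr add0r.
  exact: dhX.
- exists E; split => //; apply: eqTotP => p' q' _ x y.
  by rewrite /bifam_sub opprB addrC subrK.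
Qed.

Lemma staircase d X Y :
  TotElem act d X -> eqTot d.+1 (DTot X) Y -> columns_le d.+1 0 Y ->
  exists X', [/\ TotElem act d X', eqTot d.+1 (DTot X') Y, columns_le d 0 X' &
                TotCobound act d (bifam_sub X X')].
Proof.
move=> TX DXY Y0.
suff from_col c : forall X, TotElem act d X -> eqTot d.+1 (DTot X) Y ->
    columns_le d c X ->
  exists X', [/\ TotElem act d X', eqTot d.+1 (DTot X') Y, columns_le d 0 X' &
                TotCobound act d (bifam_sub X X')].
  by apply: (from_col d X TX DXY) => p q ? ? ? ?; lia.
elim: c => [|c IH] X' TX' DX' X'c.
  exists X'; split => //; apply: TotCobound_eq (TotCobound0 actD d) => p q _ x y.
  by rewrite /bifam_sub subrr.
have [ltcd|ledc] := ltnP c d; last by apply: IH => // p q ? ? ? ?; lia.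
have [X1 [TX1 DX1 X1c cobX1]] := kill_top_column ltcd TX' DX' Y0 X'c.
have [X'' [TX'' DX'' X''0 cobX'']] := IH X1 TX1 DX1 X1c.
by exists X''; split => //; exact: TotCobound_trans cobX1 cobX''.
Qed.

End Staircase.

Section Augmentation.
Variables (G : topGroupType) (A : topologicalZmodType) (act : G -> A -> A).
Hypothesis actD : forall g a b, act g (a + b) = act g a + act g b.

Lemma jhk0 n (f : Gpow G n.+1 -> A) : jhk f 0 n = fun _ y => f y.
Proof.
apply/funext => x; apply/funext => y; rewrite /jhk !eqxx /=; congr f.
by apply/funext => i; congr y; apply: val_inj; rewrite /= inordK.
Qed.

Lemma columns_le_jhk d c n (f : Gpow G n.+1 -> A) : columns_le d c (jhk f).
Proof. by case. Qed.

Lemma TotElem_jhk n (f : Gpow G n.+1 -> A) :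
  Ccochain act f -> TotElem act n (jhk f).
Proof.
move=> [If [U [nU fU]]] [|p] q hpq; last first.
  by split; [exact: Abi0 | exact: (Ginvariant0 actD)].
have -> : q = n by lia.
rewrite jhk0; split; last by move=> g x y; exact: If.
apply/AbiP; exists U => // K tK u v cu cv Uv.
by apply/continuousP => B oB; exact: fU B oB K tK v cv Uv.
Qed.

Lemma DTot_jhk n (f : Gpow G n.+1 -> A) : eqTot n.+1 (DTot (jhk f)) (jhk (dC f)).
Proof.
apply: eqTotP => -[|[|p]] q hpq.
- have -> : q = n.+1 by lia.
  by move=> x y; rewrite DTot0S !jhk0 /dv expr0 mulr1z.
- have -> : q = n by lia.
  move=> x y; rewrite DTot_top_col ?jhk0; last exact: columns_le_jhk.
  by rewrite /dh big_ord_recl big_ord1 expr0 expr1 mulr1z mulrN1z subrr.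
- by move=> x y; rewrite DTot_top_col ?dh_eq0 //; exact: columns_le_jhk.
Qed.

Lemma jhk_representative d (X Y : bifam G A) :
  TotElem act d X -> eqTot d.+1 (DTot X) Y -> columns_le d.+1 0 Y ->
  exists f, [/\ Ccochain act f, TotCobound act d (bifam_sub X (jhk f)) &
                forall y, dC f y = Y 0 d.+1 (fun _ => y ord0) y].
Proof.
move=> TX DXY Y0; have [X' [TX' DX' X'0 cobX']] := staircase actD TX DXY Y0.
have [AX' IX'] := TX' 0 d erefl.
have dhX' x y : dh (X' 0 d) x y = 0.
  by rewrite -DTot_top_col ?(DX' 1 d) //; exact: Y0.
have X'E := dh_cocycle_col0 dhX'.
exists (fun y => X' 0 d (fun _ => y ord0) y); split.
- exact: Ccochain_col0.
- apply: TotCobound_eq cobX' => -[|p] q hpq; last by move=> x y; rewrite /bifam_sub X'0.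
  have -> : q = d by lia.
  by move=> x y; rewrite /bifam_sub jhk0 (X'E x).
- move=> y; rewrite -(DX' 0 d.+1) // DTot0S /dv expr0 mulr1z /dC.
  by apply: eq_bigr => i _; rewrite (X'E (fun _ => y ord0)).
Qed.

End Augmentation.

Theorem mainTheorem10 (G : topGroupType) (A : topologicalZmodType)
  (act : G -> A -> A) :
  is_kgroup G -> is_kmodule act ->
  forall n : nat,
  [/\ (forall f : Gpow G n.+1 -> A, Ccochain act f -> TotElem act n (jhk f)),
      (forall f : Gpow G n.+1 -> A, Ccochain act f -> eqTot n.+1 (DTot (jhk f)) (jhk (dC f))),
      (forall F, TotElem act n F -> eqTot n.+1 (DTot F) (@bifam0 G A) ->
         exists f : Gpow G n.+1 -> A, [/\ Ccochain act f, dC f = (fun _ => 0%R) &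
                       TotCobound act n (bifam_sub F (jhk f))]) &
      (forall f : Gpow G n.+1 -> A, Ccochain act f -> dC f = (fun _ => 0%R) ->
         TotCobound act n (jhk f) -> CCobound act n f)].
Proof.
move=> _ [_ _ actD _] n; split.
- by move=> f; exact: TotElem_jhk.
- by move=> f _; exact: DTot_jhk.
- move=> F TF DF0; have Y0 : columns_le n.+1 0 (@bifam0 G A) by [].
  have [f [Cf cobF dCf]] := jhk_representative actD TF DF0 Y0.
  by exists f; split => //; apply/funext => y; rewrite dCf.
- case: n => [|m] f Cf _ cob_jf.
    apply/funext => y; have := cob_jf 0%N 0%N erefl.
    by rewrite jhk0 => /(congr1 (fun F => F (fun _ => y ord0) y)).
  have [E [TE jDE]] := cob_jf.
  have DEj : eqTot m.+1 (DTot E) (jhk f) by move=> p q hpq; rewrite jDE.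
  have Y0 : columns_le m.+1 0 (jhk f) by exact: columns_le_jhk.
  have [e [Ce _ dCe]] := jhk_representative actD TE DEj Y0.
  by exists e; split => //; apply/funext => y; rewrite dCe jhk0.
Qed.
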